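(* Let $d\ge2$ and let $g,g_0,\dots,g_d$ be positive integers with $g=\mathrm{lcm}(g_0,\dots,g_d)$. Let $A=(\alpha_0,\dots,\alpha_d)$ be positive integers with $\sum_{i=0}^d1/\alpha_i=1/g$, and let $w=(w_0,\dots,w_d)$ with $w_i=t_A/\alpha_i$, $t_A=\mathrm{lcm}(\alpha_0,\dots,\alpha_d)$, $|w|=\sum w_i$. Let $P=[v_0\ \cdots\ v_d]$ be a $d\times(d+1)$ integer matrix of the form $$P=\begin{pmatrix}a_{11}&a_{12}&\cdots&a_{1d}&-b_1\\0&a_{22}&\cdots&a_{2d}&-b_2\\\vdots&\ddots&\ddots&\vdots&\vdots\\0&\cdots&0&a_{dd}&-b_d\end{pmatrix}$$ such that for all $k=1,\dots,d$: (i) $a_{kk}\ge1$ and $a_{kk}\mid\alpha_{k-1}$; (ii) $0\le a_{ik}<a_{kk}$ for $1\le i<k$; (iii) $b_kw_d=a_{kk}w_{k-1}+a_{k,k+1}w_k+\dots+a_{kd}w_{d-1}$. Then $\Delta=\Delta(P)$ is a $d$-dimensional lattice simplex containing the origin in its interior, its reduced weight system is $w$, and for $k=0,\dots,d$ the vertex $u_k=(u_{k1},\dots,u_{kd})$ of $\Delta^*$ satisfying $\langle u_k,v_j\rangle=-1$ for all $j\ne k$ is given recursively for $j=1,\dots,d$ by $$u_{kj}=\begin{cases}\dfrac{|w|-w_k}{a_{jj}w_k}-\dfrac{\sum_{l=1}^{j-1}a_{lj}u_{kl}}{a_{jj}},& j=k+1,\\[2mm] \dfrac{-1-\sum_{l=1}^{j-1}a_{lj}u_{kl}}{a_{jj}},&\text{otherwise.}\end{cases}$$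 If moreover $g_ku_k$ is a primitive vector of $\mathbb{Z}^d$ for every $k$, then $\Delta$ has Gorenstein index $g$ and local Gorenstein indices $g_0,\dots,g_d$.
   Context: $\Delta(P)$ is the convex hull of the columns of $P$; its dual is $\Delta^*=\{u:\langle u,v\rangle\ge-1\ \forall v\in\Delta\}$. For an IP lattice simplex (vertices in $\mathbb{Z}^d$, origin in the interior) with vertices $v_0,\dots,v_d$, the weight system is $(q_0,\dots,q_d)$, $q_i=|\det(v_j:j\ne i)|$, and the reduced weight system is it divided by $\gcd(q_0,\dots,q_d)$. The $k$-th local Gorenstein index is the least positive integer $g_k$ with $g_ku_k\in\mathbb{Z}^d$, where $u_k$ is the vertex of $\Delta^*$ with $\langle u_k,v_j\rangle=-1$ for $j\neq k$; the Gorenstein index is the least $g\ge1$ with $g\Delta^*$ integral, equivalently $\mathrm{lcm}(g_0,\dots,g_d)$. *)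

From HB Require Import structures.
From mathcomp Require Import all_boot all_order all_algebra.
Set Implicit Arguments. Unset Strict Implicit. Unset Printing Implicit Defensive.
Import Order.TTheory GRing.Theory Num.Theory.
Local Open Scope ring_scope.

(* The d x (d+1) integer matrix P = [v_0 ... v_d] of the paper, built from
   1-based entries a i k (1 <= i,k <= d) and b k (1 <= k <= d):
   column j (0-based, j < d) is (a 1 (j+1), ..., a d (j+1)), the last column
   is (-b 1, ..., -b d). *)
Definition Pmat (d : nat) (a : nat -> nat -> int) (b : nat -> int)
  : 'M[int]_(d, d.+1) :=
  \matrix_(i < d, j < d.+1) if (j < d)%N then a i.+1 j.+1 else - b i.+1.

Definition vtx (d : nat) (P : 'M[int]_(d, d.+1)) (j : 'I_d.+1) : 'cV[rat]_d :=
  \col_(i < d) ((P i j)%:~R : rat).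

Definition pairing (d : nat) (u : 'rV[rat]_d) (v : 'cV[rat]_d) : rat :=
  \sum_(i < d) u 0 i * v i 0.

(* Delta(P) is a d-dimensional lattice simplex with the origin in its interior:
   the vertices are affinely independent (v_1 - v_0, ..., v_d - v_0 linearly
   independent) and the origin has strictly positive barycentric coordinates. *)
Definition IP_simplex (d : nat) (P : 'M[int]_(d, d.+1)) : Prop :=
  \rank (\matrix_(i < d, j < d) (vtx P (lift ord0 j) i 0 - vtx P ord0 i 0)) = d
  /\ exists lam : 'I_d.+1 -> rat,
       (forall j, 0 < lam j) /\ \sum_(j < d.+1) lam j = 1 /\
       (forall i : 'I_d, \sum_(j < d.+1) lam j * vtx P j i 0 = 0).

Definition weight (d : nat) (P : 'M[int]_(d, d.+1)) (i : 'I_d.+1) : nat :=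
  `|\det (col' i P)|%N.

Definition reduced_weight (d : nat) (P : 'M[int]_(d, d.+1)) (i : 'I_d.+1) : nat :=
  (weight P i %/ \big[gcdn/0%N]_(j < d.+1) weight P j)%N.

Definition is_dual_vertex (d : nat) (P : 'M[int]_(d, d.+1)) (k : 'I_d.+1)
  (u : 'rV[rat]_d) : Prop :=
  forall j : 'I_d.+1, j != k -> pairing u (vtx P j) = -1.

Definition integral_vec (d : nat) (u : 'rV[rat]_d) : bool :=
  [forall i, u 0 i \is a Num.int].

Definition primitive_vec (d : nat) (u : 'rV[rat]_d) : Prop :=
  exists z : 'rV[int]_d, u = map_mx (fun x : int => (x%:~R : rat)) z /\
    (\big[gcdn/0%N]_(i < d) `|z ord0 i|%N = 1)%N.

Definition is_local_gorenstein_index (d : nat) (P : 'M[int]_(d, d.+1))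
  (k : 'I_d.+1) (n : nat) : Prop :=
  exists u, is_dual_vertex P k u /\ (0 < n)%N /\ integral_vec (n%:R *: u) /\
    forall m : nat, (0 < m)%N -> integral_vec (m%:R *: u) -> (n <= m)%N.

(* n is the Gorenstein index: least positive integer with n Delta^* integral,
   i.e. all vertices n u_k of n Delta^* are lattice points *)
Definition is_gorenstein_index (d : nat) (P : 'M[int]_(d, d.+1)) (n : nat) : Prop :=
  (0 < n)%N /\
  (forall k u, is_dual_vertex P k u -> integral_vec (n%:R *: u)) /\
  forall m : nat, (0 < m)%N ->
    (forall k u, is_dual_vertex P k u -> integral_vec (m%:R *: u)) -> (n <= m)%N.

Definition tA (d : nat) (alpha : nat -> nat) : nat :=
  \big[lcmn/1%N]_(i < d.+1) alpha i.
Definition wt (d : nat) (alpha : nat -> nat) (i : nat) : nat := (tA d alpha %/ alpha i)%N.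
Definition wsum (d : nat) (alpha : nat -> nat) : nat := (\sum_(i < d.+1) wt d alpha i)%N.

(* The recursive formula for u_kj (j 1-based, k 0-based); prev = [u_k1; ...; u_k(j-1)] *)
Definition ustep (d : nat) (a : nat -> nat -> int) (alpha : nat -> nat)
  (k j : nat) (prev : seq rat) : rat :=
  let ajj : rat := (a j j)%:~R in
  let s : rat := \sum_(1 <= l < j) (a l j)%:~R * nth 0 prev l.-1 in
  let wk : rat := (wt d alpha k)%:R in
  if j == k.+1 then ((wsum d alpha)%:R - wk) / (ajj * wk) - s / ajj
  else (-1 - s) / ajj.

Fixpoint useq (d : nat) (a : nat -> nat -> int) (alpha : nat -> nat) (k n : nat)
  : seq rat :=
  match n with
  | 0 => [::]
  | n'.+1 => let p := useq d a alpha k n' in rcons p (ustep d a alpha k n'.+1 p)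
  end.

Definition urec (d : nat) (a : nat -> nat -> int) (alpha : nat -> nat) (k : nat)
  : 'rV[rat]_d := \row_(j < d) nth 0 (useq d a alpha k d) j.

From HB Require Import structures.
From mathcomp Require Import all_boot all_order all_algebra.
From mathcomp Require Import zify ring.
Set Implicit Arguments. Unset Strict Implicit. Unset Printing Implicit Defensive.
Import Order.TTheory GRing.Theory Num.Theory.
Local Open Scope ring_scope.

(* Condition (iii) together with the triangular shape of [P] says that
   [sum_j w_j v_j = 0], and the block [v_0 ... v_(d-1)] is triangular with
   nonzero diagonal, hence invertible.  So the kernel of [P] is the line
   spanned by the positive vector [w]: the origin is interior with barycentric
   coordinates [w / |w|], the signed maximal minors of [P] (which lie in the
   kernel by Laplace expansion) are proportional to [w], whence the reduced
   weights are [w] because [gcd w = 1], and each dual vertex is unique since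
   the [v_j], [j <> k], span.  The recursion for [u_k] is forward substitution
   for [<u_k, v_j> = -1] ([j < d, j <> k]) and [<u_k, v_k> = (|w| - w_k) / w_k];
   the relation then forces [<u_k, v_d> = -1].  Finally, when [g_k u_k] is
   primitive, [m u_k] is integral exactly when [g_k] divides [m]. *)

Lemma ord_widen_or_max d (j : 'I_d.+1) :
  (exists j' : 'I_d, j = widen_ord (leqnSn d) j') \/ j = ord_max.
Proof.
case: (unliftP ord_max j) => [j' ->|->]; last by right.
by left; exists j'; apply: val_inj; exact: lift_max.
Qed.

Lemma signed_minors_in_kernel (R : comPzRingType) d (P : 'M[R]_(d, d.+1)) (r : 'I_d) :
  \sum_(j < d.+1) ((-1) ^+ j * \det (col' j P)) * P r j = 0.
Proof.
pose Q : 'M[R]_d.+1 := \matrix_(i, j) P (odflt r (unlift ord0 i)) j.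
have detQ : \det Q = 0.
  apply: (@determinant_alternate _ _ _ ord0 (lift ord0 r)); first exact: neq_lift.
  by move=> j; rewrite !mxE unlift_none liftK.
rewrite -[RHS]detQ (expand_det_row Q ord0); apply: eq_bigr => j _.
rewrite /cofactor mxE unlift_none /= mulrC add0n; congr (_ * (_ * _)).
by congr (\det _); apply/matrixP => i l; rewrite !mxE liftK.
Qed.

Lemma biggcdn_proportional n (c w : 'I_n.+1 -> nat) (n0 : 'I_n.+1) :
  (forall j, c j * w n0 = c n0 * w j)%N -> (\big[gcdn/0%N]_j w j = 1)%N ->
  (0 < w n0)%N -> (0 < c n0)%N -> forall i, (c i %/ \big[gcdn/0%N]_j c j)%N = w i.
Proof.
move=> c_prop gcd_w w0 c0.
have w0_dvd : (w n0 %| c n0)%N.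
  have : (w n0 %| \big[gcdn/0%N]_j (c n0 * w j))%N.
    by apply/dvdn_biggcdP => j _; rewrite -c_prop; exact: dvdn_mull.
  by rewrite -(big_morph (muln (c n0)) (muln_gcdr (c n0)) (muln0 (c n0))) gcd_w muln1.
pose T := (c n0 %/ w n0)%N.
have cn0 : c n0 = (T * w n0)%N by rewrite divnK.
have cE j : c j = (T * w j)%N.
  by apply/eqP; rewrite -(eqn_pmul2r w0) c_prop cn0 mulnAC.
have T0 : (0 < T)%N by move: c0; rewrite cE muln_gt0 => /andP [].
have -> : (\big[gcdn/0%N]_j c j = T)%N.
  rewrite (eq_bigr (fun j => T * w j)%N) //.
  by rewrite -(big_morph (muln T) (muln_gcdr T) (muln0 T)) gcd_w muln1.
by move=> i; rewrite cE mulKn.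
Qed.

Lemma biglcmn_gt0 n (f : 'I_n -> nat) :
  (forall i, 0 < f i)%N -> (0 < \big[lcmn/1%N]_i f i)%N.
Proof.
move=> f_gt0; apply: (big_ind (fun x => 0 < x)%N) => // x y x0 y0.
by rewrite lcmn_gt0 x0 y0.
Qed.

Lemma primitive_scale_integral d (u : 'rV[rat]_d) (n m : nat) : (0 < n)%N ->
  primitive_vec (n%:R *: u) -> (integral_vec (m%:R *: u) <-> (n %| m)%N).
Proof.
move=> n0 [z [nuE gcd_z]].
have nuiE i : (n%:R : rat) * u 0 i = (z 0 i)%:~R.
  by have := congr1 (fun M : 'rV[rat]_d => M 0 i) nuE; rewrite !mxE.
split=> [/forallP mu_int | /dvdnP [q ->]]; last first.
  apply/forallP => i; rewrite mxE; apply/intrP; exists (q%:Z * z 0 i).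
  by rewrite intrM -nuiE natrM -[(q%:Z)%:~R]/(q%:R : rat); ring.
have n_dvd i : (n %| m * `|z ord0 i|)%N.
  have /intrP [y yE] := mu_int i; rewrite mxE in yE.
  have : ((m%:Z * z 0 i)%:~R : rat) = ((n%:Z * y)%:~R : rat).
    rewrite !intrM -nuiE -yE -[(m%:Z)%:~R]/(m%:R : rat) -[(n%:Z)%:~R]/(n%:R : rat).
    by ring.
  by move/intr_inj/(congr1 absz); rewrite !abszM /= => ->; exact: dvdn_mulr.
have : (n %| \big[gcdn/0%N]_(i < d) (m * `|z ord0 i|))%N.
  by apply/dvdn_biggcdP => i _; exact: n_dvd.
by rewrite -(big_morph (muln m) (muln_gcdr m) (muln0 m)) gcd_z muln1.
Qed.

Lemma gorenstein_indices_of_primitive d (P : 'M[int]_(d, d.+1))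
    (gl : nat -> nat) (u : 'I_d.+1 -> 'rV[rat]_d) :
  (forall k v, is_dual_vertex P k v <-> v = u k) ->
  (forall k : 'I_d.+1, 0 < gl k)%N ->
  (forall k : 'I_d.+1, primitive_vec ((gl k)%:R *: u k)) ->
  is_gorenstein_index P (\big[lcmn/1%N]_(k < d.+1) gl k) /\
  forall k : 'I_d.+1, is_local_gorenstein_index P k (gl k).
Proof.
move=> uE gl_gt0 u_prim.
have intE k m : integral_vec (m%:R *: u k) <-> (gl k %| m)%N.
  exact: primitive_scale_integral.
split.
  split; first exact: biglcmn_gt0.
  split=> [k v /uE -> | m m0 m_int]; first by apply/intE; exact: biglcmn_sup.
  apply: dvdn_leq => //; apply/dvdn_biglcmP => k _; apply/intE.
  by apply: m_int; exact/uE.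
move=> k; exists (u k); split; first exact/uE.
split=> //; split; first exact/intE.
by move=> m m0 /intE; apply: dvdn_leq.
Qed.

Lemma tA_gt0 d alpha : (forall i, i <= d -> 0 < alpha i)%N -> (0 < tA d alpha)%N.
Proof. by move=> alpha_gt0; apply: biglcmn_gt0 => i; apply: alpha_gt0; rewrite -ltnS. Qed.

Lemma alpha_dvd_tA d alpha i : (i <= d)%N -> (alpha i %| tA d alpha)%N.
Proof. by rewrite -ltnS => ltid; exact: (biglcmn_sup (Ordinal ltid)). Qed.

Lemma wt_gt0 d alpha i : (forall i, i <= d -> 0 < alpha i)%N ->
  (i <= d)%N -> (0 < wt d alpha i)%N.
Proof.
move=> alpha_gt0 le_id; rewrite /wt divn_gt0 ?alpha_gt0 //.
by apply: dvdn_leq; [exact: tA_gt0 | exact: alpha_dvd_tA].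
Qed.

Lemma wt_ratr_gt0 d alpha (j : 'I_d.+1) : (forall i, i <= d -> 0 < alpha i)%N ->
  0 < ((wt d alpha j)%:R : rat).
Proof. by move=> alpha_gt0; rewrite ltr0n wt_gt0 // -ltnS. Qed.

(* Every [alpha_i] divides [t_A / G] for [G = gcd w], so [t_A] does too. *)
Lemma biggcdn_wt d alpha : (forall i, i <= d -> 0 < alpha i)%N ->
  (\big[gcdn/0%N]_(j < d.+1) wt d alpha j = 1)%N.
Proof.
move=> alpha_gt0; set G := \big[gcdn/0%N]_(j < d.+1) wt d alpha j.
have G_dvd := elimT (dvdn_biggcdP _ _ G) (dvdnn G).
have G_gt0 : (0 < G)%N.
  rewrite lt0n; apply: contraTneq (wt_gt0 alpha_gt0 (leq0n d)) => G0.
  by move: (G_dvd ord0 isT); rewrite G0 dvd0n => /eqP ->.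
have tA0 := tA_gt0 alpha_gt0.
have G_dvd_tA : (G %| tA d alpha)%N.
  by apply: dvdn_trans (G_dvd ord0 isT) _; apply: dvdn_div; exact: alpha_dvd_tA.
have tA_dvd : (tA d alpha %| tA d alpha %/ G)%N.
  rewrite {1}/tA; apply/dvdn_biglcmP => i _.
  have /divnK tAE := alpha_dvd_tA alpha (ltnSE (ltn_ord i)).
  by rewrite -tAE mulnC -muln_divA ?G_dvd //; exact: dvdn_mulr.
have : (0 < tA d alpha %/ G)%N by rewrite divn_gt0 // dvdn_leq.
move=> /dvdn_leq/(_ tA_dvd); rewrite leq_divRL // => le_tA.
by apply/eqP; rewrite eqn_leq G_gt0 andbT; nia.
Qed.

Definition lead_block d (P : 'M[int]_(d, d.+1)) : 'M[rat]_d :=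
  \matrix_(i, j) (P i (widen_ord (leqnSn d) j))%:~R.

Lemma pairingBl d (u v : 'rV[rat]_d) (x : 'cV[rat]_d) :
  pairing (u - v) x = pairing u x - pairing v x.
Proof. by rewrite /pairing -sumrB; apply: eq_bigr => i _; rewrite !mxE mulrBl. Qed.

Section KernelLine.

Variables (d : nat) (P : 'M[int]_(d, d.+1)) (W : 'I_d.+1 -> rat).
Hypothesis lead_unit : lead_block P \in unitmx.
Hypothesis P_W : forall i, \sum_j W j * (P i j)%:~R = 0.

(* The combination [W_d lam - lam_d W] of two kernel vectors vanishes at [d],
   so it is killed by the invertible block [v_0 ... v_(d-1)]. *)
Lemma kernel_proportional (lam : 'I_d.+1 -> rat) :
  (forall i, \sum_j lam j * (P i j)%:~R = 0) ->
  forall j, lam j * W ord_max = lam ord_max * W j.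
Proof.
move=> P_lam; pose mu j := lam j * W ord_max - lam ord_max * W j.
have P_mu i : \sum_j mu j * (P i j)%:~R = 0.
  have -> : \sum_j mu j * (P i j)%:~R =
      W ord_max * \sum_j lam j * (P i j)%:~R - lam ord_max * \sum_j W j * (P i j)%:~R.
    by rewrite !mulr_sumr -sumrB; apply: eq_bigr => j _; rewrite /mu; ring.
  by rewrite P_lam P_W !mulr0 subr0.
pose c : 'cV[rat]_d := \col_j mu (widen_ord (leqnSn d) j).
have c0 : c = 0.
  suff lead_c : lead_block P *m c = 0 by rewrite -(mulKmx lead_unit c) lead_c mulmx0.
  apply/matrixP => i k; rewrite !mxE (ord1 k) -[RHS](P_mu i).
  rewrite big_ord_recr /= {2}/mu subrr mul0r addr0.
  by apply: eq_bigr => j _; rewrite !mxE mulrC.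
move=> j; case: (ord_widen_or_max j) => [[j' ->]|->]; last by rewrite mulrC.
apply/eqP; rewrite -subr_eq0; apply/eqP.
by have := congr1 (fun M : 'cV[rat]_d => M j' 0) c0; rewrite !mxE.
Qed.

Lemma pairing_kernel (x : 'rV[rat]_d) : \sum_j W j * pairing x (vtx P j) = 0.
Proof.
rewrite /pairing; under eq_bigr do rewrite mulr_sumr.
rewrite exchange_big /= big1 // => i _.
under eq_bigr do rewrite !mxE mulrCA.
by rewrite -mulr_sumr P_W mulr0.
Qed.

Lemma dual_vertex_uniq (k : 'I_d.+1) (u v : 'rV[rat]_d) : W k != 0 ->
  is_dual_vertex P k u -> is_dual_vertex P k v -> u = v.
Proof.
move=> Wk0 uk vk; apply/eqP; rewrite -subr_eq0; apply/eqP; set x := u - v.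
have x_vtx j : j != k -> pairing x (vtx P j) = 0.
  by move=> jk; rewrite pairingBl uk // vk // subrr.
have x_vtxk : pairing x (vtx P k) = 0.
  have := pairing_kernel x; rewrite (bigD1 k) //= big1 ?addr0; last first.
    by move=> j /x_vtx ->; rewrite mulr0.
  by move/eqP; rewrite mulf_eq0 (negPf Wk0) => /eqP.
have x_lead : x *m lead_block P = 0.
  apply/matrixP => i j; rewrite (ord1 i) !mxE.
  transitivity (pairing x (vtx P (widen_ord (leqnSn d) j))).
    by apply: eq_bigr => l _; rewrite !mxE.
  by case: (eqVneq (widen_ord (leqnSn d) j) k) => [->|/x_vtx ->].
by rewrite -(mulmxK lead_unit x) x_lead mul0mx.
Qed.

Lemma weight_max_gt0 : (0 < weight P ord_max)%N.
Proof.
rewrite /weight absz_gt0.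
have leadE : lead_block P = map_mx intr (col' ord_max P).
  apply/matrixP => p q; rewrite !mxE; congr (P _ _)%:~R.
  by apply: val_inj; exact: esym (lift_max q).
move: lead_unit; rewrite leadE unitmxE unitfE det_map_mx.
by apply: contra => /eqP ->; rewrite rmorph0.
Qed.

Lemma reduced_weight_of_kernel (w : 'I_d.+1 -> nat) :
  (forall j, W j = (w j)%:R) -> (\big[gcdn/0%N]_j w j = 1)%N ->
  (forall j, 0 < w j)%N -> forall i, reduced_weight P i = w i.
Proof.
move=> WE gcd_w w_gt0.
pose c (j : 'I_d.+1) : int := (-1) ^+ j * \det (col' j P).
have P_c r : \sum_j ((c j)%:~R : rat) * (P r j)%:~R = 0.
  have := congr1 (fun x : int => (x%:~R : rat)) (signed_minors_in_kernel P r).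
  rewrite /= rmorph_sum rmorph0 => cE; apply: eq_trans cE.
  by apply: eq_bigr => j _; rewrite /c !rmorphM.
have weight_prop j : (weight P j * w ord_max = weight P ord_max * w j)%N.
  have WzE i : W i = ((w i)%:Z)%:~R by rewrite WE.
  have := kernel_proportional P_c j; rewrite !WzE -!intrM => /intr_inj.
  by move/(congr1 absz); rewrite !abszM !absz_sign !mul1n.
exact: biggcdn_proportional weight_prop gcd_w (w_gt0 _) weight_max_gt0.
Qed.

Hypothesis W_gt0 : forall j, 0 < W j.

Lemma sum_W_gt0 : 0 < \sum_j W j.
Proof. by rewrite big_ord_recl ltr_pwDl // sumr_ge0 // => i _; exact: ltW. Qed.

(* A row [v] with [v *m E^T = 0] for the edge matrix [E] yields the kernel
   vector [(- sum v, v)] of [P], which is proportional to [W] and has zero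
   coordinate sum, hence vanishes. *)
Lemma edge_matrix_unit :
  \matrix_(i < d, j < d) (vtx P (lift ord0 j) i 0 - vtx P ord0 i 0) \in unitmx.
Proof.
rewrite unitmxE unitfE -det_tr; apply/negP => /det0P [v v0 vE].
pose lam j := if unlift ord0 j is Some j' then v 0 j' else - \sum_i v 0 i.
have lam0 : lam ord0 = - \sum_i v 0 i by rewrite /lam unlift_none.
have lamS (j : 'I_d) : lam (lift ord0 j) = v 0 j by rewrite /lam liftK.
have P_lam i : \sum_j lam j * (P i j)%:~R = 0.
  have := congr1 (fun M : 'rV[rat]_d => M 0 i) vE; rewrite !mxE => vEi.
  apply: eq_trans vEi; rewrite big_ord_recl lam0.
  rewrite [X in _ + X](eq_bigr (fun j => v 0 j * (P i (lift ord0 j))%:~R)); last first.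
    by move=> j _; rewrite lamS.
  under [in RHS]eq_bigr do rewrite !mxE mulrBr.
  by rewrite sumrB -mulr_suml mulNr addrC.
have lamW := kernel_proportional P_lam.
have : (\sum_j lam j) * W ord_max = lam ord_max * \sum_j W j.
  by rewrite mulr_suml mulr_sumr; apply: eq_bigr => j _; exact: lamW.
rewrite big_ord_recl lam0 (eq_bigr _ (fun j _ => lamS j)) addNr mul0r.
move/esym/eqP; rewrite mulf_eq0 (gt_eqF sum_W_gt0) orbF => /eqP lam_max.
apply: (negP v0); apply/eqP/matrixP => i j; rewrite (ord1 i) mxE -lamS.
have := lamW (lift ord0 j); rewrite lam_max mul0r => /eqP.
by rewrite mulf_eq0 (gt_eqF (W_gt0 _)) orbF => /eqP.
Qed.

Lemma IP_simplex_of_kernel : IP_simplex P.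
Proof.
split; first exact: mxrank_unit edge_matrix_unit.
exists (fun j => W j / \sum_j W j); split; [|split].
- by move=> j; rewrite divr_gt0 ?sum_W_gt0.
- by rewrite -mulr_suml divff // gt_eqF ?sum_W_gt0.
- move=> i; under eq_bigr do rewrite !mxE mulrAC.
  by rewrite -mulr_suml P_W mul0r.
Qed.

End KernelLine.

Lemma size_useq d a alpha k n : size (useq d a alpha k n) = n.
Proof. by elim: n => //= n IH; rewrite size_rcons IH. Qed.

Lemma nth_useq_addn d a alpha k m p i : (i < m)%N ->
  nth 0 (useq d a alpha k (p + m)) i = nth 0 (useq d a alpha k m) i.
Proof. by move=> lt_im; elim: p => //= p IH; rewrite nth_rcons size_useq ltn_addl. Qed.

Lemma nth_useq d a alpha k j n : (j < n)%N ->
  nth 0 (useq d a alpha k n) j = ustep d a alpha k j.+1 (useq d a alpha k j).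
Proof.
move=> lt_jn; rewrite -(subnK lt_jn) nth_useq_addn //=.
by rewrite nth_rcons size_useq ltnn eqxx.
Qed.

Section TriangularP.

Variables (d : nat) (a : nat -> nat -> int) (b : nat -> int) (alpha : nat -> nat).
Hypothesis alpha_gt0 : forall i, (i <= d)%N -> (0 < alpha i)%N.
Hypothesis a_triu : forall i k, (1 <= k)%N -> (k < i)%N -> (i <= d)%N -> a i k = 0.
Hypothesis a_diag : forall k, (1 <= k <= d)%N -> 1 <= a k k.
Hypothesis b_rel : forall k, (1 <= k <= d)%N ->
  b k * (wt d alpha d)%:Z = \sum_(k <= l < d.+1) a k l * (wt d alpha l.-1)%:Z.

Let P := Pmat d a b.
Let W (j : 'I_d.+1) : rat := (wt d alpha j)%:R.

Lemma a_diag_neq0 (j : 'I_d) : ((a j.+1 j.+1)%:~R : rat) != 0.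
Proof. by rewrite intr_eq0 gt_eqF // (lt_le_trans ltr01) // a_diag //= ltn_ord. Qed.

Lemma lead_block_Pmat i j : lead_block P i j = (a i.+1 j.+1)%:~R.
Proof. by rewrite !mxE /= ltn_ord. Qed.

Lemma lead_block_Pmat_unit : lead_block P \in unitmx.
Proof.
rewrite unitmxE unitfE -det_tr det_trig.
  by apply/prodf_neq0 => i _; rewrite mxE lead_block_Pmat a_diag_neq0.
apply/is_trig_mxP => i j lt_ij.
by rewrite mxE lead_block_Pmat a_triu ?ltn_ord.
Qed.

(* Row [i] of [P] pairs with [w] to [sum_(l >= i) a_(i,l) w_(l-1) - b_i w_d],
   which is condition (iii). *)
Lemma Pmat_wt_relation (i : 'I_d) : \sum_j W j * (P i j)%:~R = 0.
Proof.
suff rel_int : \sum_(j < d.+1) (wt d alpha j)%:Z * P i j = 0.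
  have := congr1 (fun x : int => (x%:~R : rat)) rel_int.
  rewrite /= rmorph_sum rmorph0 => relE; apply: eq_trans relE.
  by apply: eq_bigr => j _; rewrite rmorphM.
rewrite big_ord_recr /= !mxE /= ltnn.
rewrite (eq_bigr (fun j : 'I_d => a i.+1 j.+1 * (wt d alpha j.+1.-1)%:Z)); last first.
  by move=> j _; rewrite mxE /= ltn_ord mulrC.
rewrite -(big_mkord xpredT (fun j => a i.+1 j.+1 * (wt d alpha j.+1.-1)%:Z)).
rewrite -(big_add1 _ _ 0 d.+1 xpredT (fun l => a i.+1 l * (wt d alpha l.-1)%:Z)).
rewrite (@big_cat_nat _ _ _ i.+1 1) //=; last by rewrite ltnS ltnW.
rewrite big_nat_cond big1 ?add0r; last first.
  by move=> l /andP [/andP [l_gt0 l_lt] _]; rewrite a_triu ?ltn_ord.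
by rewrite -b_rel ?ltn_ord //; ring.
Qed.

(* Forward substitution: [urec] solves the triangular system given by the
   first [d] vertices. *)
Lemma pairing_urec_lead (k : 'I_d.+1) (j : 'I_d) :
  pairing (urec d a alpha k) (vtx P (widen_ord (leqnSn d) j)) =
  if j == k :> nat then ((wsum d alpha)%:R - W k) / W k else -1.
Proof.
pose u := useq d a alpha k d; pose F i := nth 0 u i * (a i.+1 j.+1)%:~R.
rewrite /pairing (eq_bigr (fun i : 'I_d => F i)); last first.
  by move=> i _; rewrite !mxE /= ltn_ord.
rewrite -(big_mkord xpredT F) (big_cat_nat (leq0n j.+1) (ltn_ord j)) /=.
rewrite [X in _ + X]big_nat_cond [X in _ + X]big1 ?addr0; last first.
  by move=> i /andP [/andP [lt_ji lt_id] _]; rewrite /F a_triu ?mulr0.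
have uE i : (i < j)%N -> nth 0 u i = nth 0 (useq d a alpha k j) i.
  move=> lt_ij; rewrite /u -[X in useq _ _ _ _ X](subnK (ltnW (ltn_ord j))).
  exact: nth_useq_addn.
rewrite big_nat_recr //= {2}/F /u nth_useq // /ustep big_add1 /=.
have -> : \sum_(0 <= i < j) (a i.+1 j.+1)%:~R * (useq d a alpha k j)`_i =
          \sum_(0 <= i < j) F i.
  by apply: eq_big_nat => i /andP [_ lt_ij]; rewrite /F uE // mulrC.
have Wk0 : W k != 0 by rewrite gt_eqF ?wt_ratr_gt0.
by rewrite eqSS; case: eqP => _; field; rewrite a_diag_neq0 ?Wk0.
Qed.

(* The pairings with [v_0 ... v_(d-1)] are known, so the relation
   [sum_j w_j <u, v_j> = 0] determines [<u, v_d>]. *)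
Lemma urec_dual_vertex (k : 'I_d.+1) : is_dual_vertex P k (urec d a alpha k).
Proof.
move=> j jk; case: (ord_widen_or_max j) => [[j' jE]|jE]; subst j.
  rewrite pairing_urec_lead ifF //; apply: contraNF jk => /eqP jE.
  by apply/eqP/val_inj; rewrite /= jE.
have lt_kd : (k < d)%N.
  by rewrite ltn_neqAle -ltnS ltn_ord andbT; apply: contra jk => /eqP kE; apply/eqP/val_inj.
pose k' : 'I_d := Ordinal lt_kd.
have := pairing_kernel Pmat_wt_relation (urec d a alpha k).
rewrite big_ord_recr /=; under eq_bigr do rewrite pairing_urec_lead.
rewrite (bigD1 k') //= eqxx.
rewrite (eq_bigr (fun i : 'I_d => - W (widen_ord (leqnSn d) i))); last first.
  move=> i ik; rewrite ifF ?mulrN1 //; apply: contraNF ik => /eqP iE.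
  by apply/eqP/val_inj.
have wsumE : ((wsum d alpha)%:R : rat) =
    W k + \sum_(i < d | i != k') W (widen_ord (leqnSn d) i) + W ord_max.
  by rewrite /wsum natr_sum big_ord_recr /= (bigD1 k').
rewrite sumrN wsumE => rel.
have : W ord_max * (pairing (urec d a alpha k) (vtx P ord_max) + 1) = 0.
  by rewrite -rel; field; rewrite gt_eqF ?wt_ratr_gt0.
by move/eqP; rewrite mulf_eq0 gt_eqF ?wt_ratr_gt0 //= addr_eq0 => /eqP.
Qed.

End TriangularP.

Theorem proposition5p1 (d : nat) (g : nat) (gl : nat -> nat) (alpha : nat -> nat)
    (a : nat -> nat -> int) (b : nat -> int) :
  (2 <= d)%N ->
  (0 < g)%N ->
  (forall i, (i <= d)%N -> (0 < gl i)%N) ->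
  g = \big[lcmn/1%N]_(i < d.+1) gl i ->
  (forall i, (i <= d)%N -> (0 < alpha i)%N) ->
  \sum_(i < d.+1) ((alpha i)%:R : rat)^-1 = (g%:R : rat)^-1 ->
  (* upper triangular form of P *)
  (forall i k, (1 <= k)%N -> (k < i)%N -> (i <= d)%N -> a i k = 0) ->
  (* (i) *)
  (forall k, (1 <= k <= d)%N -> 1 <= a k k /\ (a k k %| (alpha k.-1)%:Z)%Z) ->
  (* (ii) *)
  (forall i k, (1 <= i)%N -> (i < k)%N -> (k <= d)%N -> 0 <= a i k < a k k) ->
  (* (iii) *)
  (forall k, (1 <= k <= d)%N ->
     b k * (wt d alpha d)%:Z = \sum_(k <= l < d.+1) a k l * (wt d alpha l.-1)%:Z) ->
  let P := Pmat d a b in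
  [/\ IP_simplex P,
      (forall i : 'I_d.+1, reduced_weight P i = wt d alpha i),
      (forall (k : 'I_d.+1) (u : 'rV[rat]_d), is_dual_vertex P k u <-> u = urec d a alpha k)
    & ((forall (k : 'I_d.+1) (u : 'rV[rat]_d),
          is_dual_vertex P k u -> primitive_vec ((gl k)%:R *: u)) ->
       is_gorenstein_index P g /\
       forall k : 'I_d.+1, is_local_gorenstein_index P k (gl k))].
Proof.
move=> _ _ gl_gt0 gE alpha_gt0 _ a_triu a_diag _ b_rel P.
have {}a_diag k : (1 <= k <= d)%N -> 1 <= a k k by move=> /a_diag [].
have lead_unit := lead_block_Pmat_unit b a_triu a_diag.
have rel := Pmat_wt_relation a_triu b_rel.
have W_gt0 j := wt_ratr_gt0 j alpha_gt0.
have urec_dual k := @urec_dual_vertex d a b alpha alpha_gt0 a_triu a_diag b_rel k.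
have dualE k u : is_dual_vertex P k u <-> u = urec d a alpha k.
  split=> [uk|->]; last exact: urec_dual.
  by apply: (dual_vertex_uniq lead_unit rel _ uk (urec_dual k)); rewrite gt_eqF.
split=> //.
- exact: IP_simplex_of_kernel lead_unit rel W_gt0.
- apply: (reduced_weight_of_kernel lead_unit rel) => //; first exact: biggcdn_wt.
  by move=> j; rewrite wt_gt0 // -ltnS.
move=> u_prim; rewrite gE; apply: (gorenstein_indices_of_primitive dualE).
  by move=> k; rewrite gl_gt0 // -ltnS.
by move=> k; apply: u_prim; exact/dualE.
Qed.
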